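(* Fix non-negative integers $r$ and $m>r$. Let $b_j=(1^j,2^j,\dots,m^j)^T\in\mathbb{R}^m$ for $j=0,\dots,r$, and let $\tilde b_0,\dots,\tilde b_r$ be obtained by Gram–Schmidt orthogonalization (without normalization) of the ordered set $b_0,\dots,b_r$, i.e. $\tilde b_j=b_j-\Pi_{j-1}b_j$ where $\Pi_{j-1}$ is the orthogonal projection onto $\mathrm{Span}(b_0,\dots,b_{j-1})$ (and $\tilde b_0=b_0$). Then there is a constant $c_r>0$ depending only on $r$ such that for every $j\in\{0,\dots,r\}$, $$\|\tilde b_j\|^2\ge c_r\,m^{2j+1}.$$ *)

From HB Require Import structures.
From mathcomp Require Import all_boot all_order all_algebra.
Set Implicit Arguments. Unset Strict Implicit. Unset Printing Implicit Defensive.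
Import Order.TTheory GRing.Theory Num.Theory.
Local Open Scope ring_scope.

Definition dotv (R : realFieldType) (m : nat) (u v : 'rV[R]_m) : R :=
  \sum_(i < m) u 0 i * v 0 i.

Definition bvec (R : realFieldType) (m j : nat) : 'rV[R]_m :=
  \row_(i < m) (i.+1)%:R ^+ j.

(* the list [:: tb_0; ...; tb_(n-1)] of the first n Gram–Schmidt vectors
   (no normalization): tb_j = b_j - sum_(i<j) (<b_j,tb_i>/<tb_i,tb_i>) tb_i,
   i.e. b_j minus its orthogonal projection onto Span(b_0,...,b_(j-1)). *)
Fixpoint gs_list (R : realFieldType) (m n : nat) : seq 'rV[R]_m :=
  match n with
  | 0 => [::]
  | n'.+1 =>
      let L := gs_list R m n' in
      rcons L (bvec R m n' -
               \sum_(u <- L) (dotv (bvec R m n') u / dotv u u) *: u)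
  end.

Definition gs_vec (R : realFieldType) (m j : nat) : 'rV[R]_m :=
  nth 0 (gs_list R m j.+1) j.

From HB Require Import structures.
From mathcomp Require Import all_boot all_order all_algebra.
From mathcomp Require Import reals.
From mathcomp Require Import ring lra zify.
Import Order.TTheory GRing.Theory Num.Theory.
Local Open Scope ring_scope.

(* The j-th forward difference of q with
   step h is the constant j! h^j, and (a - b)^2 <= 2 a^2 + 2 b^2 gives
   (D_h^j q(x))^2 <= 4^j (q(x)^2 + q(x+h)^2 + ... + q(x+jh)^2).  For
   h = m %/ (j+1) the progressions x+1, x+1+h, ..., x+1+jh with x < h are
   disjoint subsets of {1, ..., m}; summing over x gives
   h^(2j+1) <= 4^j |tb_j|^2, and h >= m / (2j+2). *)

Section FiniteDifference.
Context {R : realFieldType}.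
Implicit Types (f g : R -> R) (h x : R).

Fixpoint fdiff h j f x : R :=
  if j is j'.+1 then fdiff h j' f (x + h) - fdiff h j' f x else f x.

Lemma eq_fdiff h j f g : f =1 g -> fdiff h j f =1 fdiff h j g.
Proof. by move=> fg; elim: j => [|j IH] x /=; rewrite ?fg ?IH. Qed.

Lemma fdiffB h j f g x :
  fdiff h j (fun y => f y - g y) x = fdiff h j f x - fdiff h j g x.
Proof. by elim: j x => [|j IH] x //=; rewrite !IH !opprD addrACA. Qed.

Lemma fdiffZ h j c f x : fdiff h j (fun y => c * f y) x = c * fdiff h j f x.
Proof. by elim: j x => [|j IH] x //=; rewrite !IH mulrBr. Qed.

Lemma fdiff_sum h j (I : Type) (r : seq I) (P : pred I) (F : I -> R -> R) x :
  fdiff h j (fun y => \sum_(i <- r | P i) F i y) x =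
  \sum_(i <- r | P i) fdiff h j (F i) x.
Proof. by elim: j x => [|j IH] x //=; rewrite !IH sumrB. Qed.

Lemma fdiffSr h j f x : fdiff h j.+1 f x = fdiff h j (fun y => f (y + h) - f y) x.
Proof.
rewrite fdiffB /=; congr (_ - _).
by elim: j x => [|j IH] x //=; rewrite !IH.
Qed.

Lemma fdiff_exp h j t x : (t <= j)%N ->
  fdiff h j (fun y => y ^+ t) x = if t == j then j`!%:R * h ^+ j else 0.
Proof.
elim: j t x => [|j IH] t x; first by rewrite leqn0 => /eqP->; rewrite mulr1.
move=> le_tj; rewrite fdiffSr.
have binom y : (y + h) ^+ t - y ^+ t = \sum_(s < t) ('C(t, s)%:R * h ^+ (t - s)) * y ^+ s.
  rewrite [y + h]addrC exprDn big_ord_recr /= subnn binn expr0 mul1r mulr1n addrK.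
  by apply: eq_bigr => s _; rewrite -mulr_natl mulrA.
rewrite (eq_fdiff h j _ _ binom) fdiff_sum.
have le_sj (s : 'I_t) : (s <= j)%N by rewrite -ltnS (leq_trans (ltn_ord s)).
under eq_bigr => s _ do rewrite fdiffZ (IH _ _ (le_sj s)).
have [->|lt_tj] := eqVneq t j.+1; last first.
  have le_tj' : (t <= j)%N by rewrite -ltnS ltn_neqAle lt_tj.
  by rewrite big1 // => s _; rewrite ifN ?mulr0 // neq_ltn (leq_trans (ltn_ord s)).
rewrite big_ord_recr /= eqxx big1 => [|s _]; last by rewrite ifN ?mulr0 ?neq_ltn ?ltn_ord.
by rewrite add0r binSn subSn // subnn expr1 factS natrM exprS; ring.
Qed.

Lemma fdiff_horner h j (p : {poly R}) x : (size p <= j.+1)%N ->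
  fdiff h j (horner p) x = j`!%:R * h ^+ j * p`_j.
Proof.
move=> size_p; rewrite (eq_fdiff h j _ _ (fun y => horner_coef_wide y size_p)) fdiff_sum.
rewrite big_ord_recr /= big1 => [|s _]; last first.
  by rewrite fdiffZ fdiff_exp ?ifN ?mulr0 ?neq_ltn ?ltn_ord // ltnW.
by rewrite add0r fdiffZ fdiff_exp // eqxx mulrC.
Qed.

Lemma fdiff_sqr_le h j f x :
  fdiff h j f x ^+ 2 <= 4 ^+ j * \sum_(i < j.+1) f (x + i%:R * h) ^+ 2.
Proof.
elim: j x => [|j IH] x; first by rewrite big_ord1 mul0r addr0 mul1r.
have le_a := IH (x + h); have le_b := IH x; rewrite /=.
set a := fdiff h j f (x + h) in le_a *; set b := fdiff h j f x in le_b *.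
set A := \sum_(i < j.+1) _ in le_a; set B := \sum_(i < j.+1) _ in le_b.
set S := \sum_(i < j.+2) _.
have S_A : S = f x ^+ 2 + A.
  rewrite /S big_ord_recl mul0r addr0; congr (_ + _).
  by apply: eq_bigr => i _; rewrite lift0 -natr1; congr (f _ ^+ 2); ring.
have S_B : S = B + f (x + j.+1%:R * h) ^+ 2 by rewrite /S big_ord_recr.
have le_aS : a ^+ 2 <= 4 ^+ j * S.
  by rewrite (le_trans le_a) // ler_wpM2l ?exprn_ge0 // S_A lerDr sqr_ge0.
have le_bS : b ^+ 2 <= 4 ^+ j * S.
  by rewrite (le_trans le_b) // ler_wpM2l ?exprn_ge0 // S_B lerDl sqr_ge0.
have := sqr_ge0 (a + b); rewrite [4 ^+ _]exprS -mulrA; lra.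
Qed.

End FiniteDifference.

Section PolynomialSamples.
Context {R : realFieldType}.

Lemma sum_blocks_le (F : nat -> R) n k m : (forall i, 0 <= F i) -> (n * k <= m)%N ->
  \sum_(i < n) \sum_(x < k) F (i * k + x)%N <= \sum_(i < m) F i.
Proof.
move=> F_ge0 le_m.
have -> : \sum_(i < n) \sum_(x < k) F (i * k + x)%N = \sum_(0 <= i < n * k) F i.
  rewrite big_nat_mul big_mkord; apply: eq_bigr => i _.
  rewrite mulSn [(k + _)%N]addnC -{2}[(i * k)%N]add0n big_addn addKn big_mkord.
  by apply: eq_bigr => x _; rewrite addnC.
by rewrite -(big_mkord xpredT) (@big_cat_nat _ _ _ (n * k) 0 m) //= lerDl sumr_ge0.
Qed.

Lemma sum_sqr_horner_ge (p : {poly R}) j h m :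
  (size p <= j.+1)%N -> (j.+1 * h <= m)%N ->
  h%:R ^+ (2 * j + 1)%N * p`_j ^+ 2 <= 4 ^+ j * \sum_(k < m) p.[k.+1%:R] ^+ 2.
Proof.
move=> size_p le_m.
have block x : h%:R ^+ (2 * j)%N * p`_j ^+ 2 <=
               4 ^+ j * \sum_(i < j.+1) p.[(i * h + x).+1%:R] ^+ 2.
  have := fdiff_sqr_le h%:R j (horner p) x.+1%:R; rewrite fdiff_horner //.
  under [X in _ <= _ * X]eq_bigr => i _ do rewrite -natrM -natrD addSn addnC.
  apply: le_trans; rewrite !exprMn mulnC exprM ler_wpM2r ?sqr_ge0 ?exprn_ge0 //.
  by rewrite ler_peMl ?exprn_ge0 // -natrX ler1n expn_gt0 fact_gt0.
have le_sum := sum_blocks_le (fun k => p.[k.+1%:R] ^+ 2) _ _ _ (fun k => sqr_ge0 _) le_m.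
apply: le_trans (ler_wpM2l (exprn_ge0 _ (ler0n _ 4)) le_sum).
rewrite exchange_big /= mulr_sumr; apply: le_trans (ler_sum _ (fun (x : 'I_h) _ => block x)).
by rewrite sumr_const card_ord addn1 exprSr -[X in _ <= X]mulr_natr mulrAC.
Qed.

Definition sample_row m (p : {poly R}) : 'rV[R]_m := \row_(k < m) p.[k.+1%:R].

Definition bspan {m} n (v : 'rV[R]_m) :=
  exists2 p : {poly R}, (size p <= n)%N & v = sample_row m p.

Lemma bvec_sample_row m n : bvec R m n = sample_row m 'X^n.
Proof. by apply/rowP => k; rewrite !mxE hornerXn. Qed.

Lemma dotv_sample_row m p :
  dotv (sample_row m p) (sample_row m p) = \sum_(k < m) p.[k.+1%:R] ^+ 2.
Proof. by apply: eq_bigr => k _; rewrite !mxE. Qed.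

Lemma bspanW m n n' (v : 'rV[R]_m) : (n <= n')%N -> bspan n v -> bspan n' v.
Proof. by move=> le_n [p size_p ->]; exists p; rewrite ?(leq_trans size_p). Qed.

Lemma bspan_lincomb m n (L : seq 'rV[R]_m) (c : 'rV[R]_m -> R) :
  (forall u, u \in L -> bspan n u) -> bspan n (\sum_(u <- L) c u *: u).
Proof.
move=> L_span; rewrite big_seq; apply: big_ind => [|_ _ [p size_p ->] [q size_q ->]|u uL].
- by exists 0; rewrite ?size_poly0 //; apply/rowP => k; rewrite !mxE horner0.
- exists (p + q); first by rewrite (leq_trans (size_add _ _)) // geq_max size_p.
  by apply/rowP => k; rewrite !mxE hornerD.
- have [p size_p ->] := L_span u uL; exists (c (sample_row m p) *: p).
    by rewrite (leq_trans (size_scale_leq _ _)).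
  by apply/rowP => k; rewrite !mxE hornerZ.
Qed.

Lemma size_gs_list m n : size (gs_list R m n) = n.
Proof. by elim: n => //= n IH; rewrite size_rcons IH. Qed.

Lemma gs_vecE m n : gs_vec R m n =
  bvec R m n - \sum_(u <- gs_list R m n) (dotv (bvec R m n) u / dotv u u) *: u.
Proof. by rewrite /gs_vec /= nth_rcons size_gs_list ltnn eqxx. Qed.

Lemma gs_listS m n : gs_list R m n.+1 = rcons (gs_list R m n) (gs_vec R m n).
Proof. by rewrite gs_vecE. Qed.

Lemma gs_vec_monic m n : (forall u, u \in gs_list R m n -> bspan n u) ->
  exists q : {poly R}, [/\ q \is monic, size q = n.+1 & gs_vec R m n = sample_row m q].
Proof.
move=> L_span; rewrite gs_vecE.
have [p size_p ->] := bspan_lincomb _ _ _ (fun u => dotv (bvec R m n) u / dotv u u) L_span.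
have size_Xn : (size (- p) < size ('X^n : {poly R}))%N.
  by rewrite size_polyN size_polyXn ltnS.
exists ('X^n - p); split.
- by rewrite monicE lead_coefDl // lead_coefXn.
- by rewrite size_addl // size_polyXn.
- by rewrite bvec_sample_row; apply/rowP => k; rewrite !mxE hornerD hornerN hornerXn.
Qed.

Lemma gs_list_bspan m n u : u \in gs_list R m n -> bspan n u.
Proof.
elim: n u => [|n IH] u //; rewrite gs_listS mem_rcons inE => /predU1P [->|uL].
  by have [q [_ size_q ->]] := gs_vec_monic m n IH; exists q; rewrite ?size_q.
exact: bspanW (leqnSn n) (IH u uL).
Qed.

End PolynomialSamples.

Lemma leq_2mul_divn d m : (0 < d)%N -> (d <= m)%N -> (m <= 2 * d * (m %/ d))%N.
Proof.
move=> d_gt0 le_dm.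
have := divn_eq m d; have := ltn_pmod m d_gt0; have : (0 < m %/ d)%N by rewrite divn_gt0.
move: (m %/ d)%N (m %% d)%N => q r; nia.
Qed.

Lemma expn_leq_block r j m : (j <= r)%N -> (j < m)%N ->
  (m ^ (2 * j + 1) <= (2 * r + 2) ^ (2 * r + 1) * (m %/ j.+1) ^ (2 * j + 1))%N.
Proof.
move=> le_jr lt_jm; have le_m := leq_2mul_divn j.+1 m (ltn0Sn j) lt_jm.
have e_gt0 : (0 < 2 * j + 1)%N by rewrite addn1.
rewrite -(leq_exp2r _ _ e_gt0) expnMn in le_m.
apply: leq_trans le_m _; rewrite leq_mul2r; apply/orP; right.
apply: (@leq_trans ((2 * r + 2) ^ (2 * j + 1))); first by rewrite leq_exp2r //; lia.
by apply: leq_pexp2l; lia.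
Qed.

Theorem lemma9 (R : realType) (r : nat) :
  exists c : R, 0 < c /\
    forall m j : nat, (r < m)%N -> (j <= r)%N ->
      c * (m%:R) ^+ (2 * j + 1) <= dotv (gs_vec R m j) (gs_vec R m j).
Proof.
pose K := (4 ^ r * (2 * r + 2) ^ (2 * r + 1))%N.
have K_gt0 : (0 : R) < K%:R by rewrite ltr0n /K muln_gt0 !expn_gt0 addn2.
exists K%:R^-1; split=> [|m j lt_rm le_jr]; first by rewrite invr_gt0.
have [q [q_monic size_q ->]] := gs_vec_monic m j (@gs_list_bspan R m j).
have lead_q : q`_j = 1 by have := monicP q_monic; rewrite lead_coefE size_q.
have le_jm : (j < m)%N := leq_ltn_trans le_jr lt_rm.
have le_block : (j.+1 * (m %/ j.+1) <= m)%N by rewrite mulnC leq_trunc_div.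
have := sum_sqr_horner_ge q j _ m (eq_leq size_q) le_block.
rewrite lead_q expr1n mulr1 -dotv_sample_row => le_hD.
have := expn_leq_block r j m le_jr le_jm; rewrite -(ler_nat R) natrM !natrX => le_mh.
rewrite ler_pdivrMl //; apply: le_trans le_mh _.
rewrite /K natrM !natrX [4 ^+ r * _]mulrC -mulrA ler_wpM2l ?exprn_ge0 //.
apply: le_trans le_hD _; rewrite ler_wpM2r ?ler_weXn2l ?ler1n //.
by rewrite dotv_sample_row sumr_ge0 // => k _; exact: sqr_ge0.
Qed.
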